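(* The function $h$ is non-differentiable on $D(h)$: at no point $x_0\in D(h)$ does the difference quotient $\frac{h(x)-h(x_0)}{x-x_0}$, $x\in D(h)$, $x\to x_0$, have a finite limit.
   Context: Let $q>3$ be an integer, fix $u\in\{0,1,\ldots,q-1\}$, and put $\Theta=\{1,2,\ldots,q-1\}\setminus\{u\}$. The nega-$q$-ary representation is $\Delta^{-q}_{\beta_1\beta_2\ldots}=\sum_{k\ge1}\frac{\beta_k}{(-q)^k}$, $\beta_k\in\{0,\ldots,q-1\}$. For a sequence $(\alpha_n)_{n\ge1}$ with $\alpha_n\in\Theta$, let $x((\alpha_n))$ be the number whose nega-$q$-ary digit string is the concatenation of the blocks $\underbrace{u\ldots u}_{\alpha_n-1}\alpha_n$ ($\alpha_n-1$ copies of $u$ followed by the digit $\alpha_n$), $n=1,2,\ldots$; equivalently $x=-\frac{u}{q+1}+\sum_{n\ge1}\frac{\alpha_n-u}{(-q)^{\alpha_1+\cdots+\alpha_n}}$. Let $D(h)$ be the set of all such $x$, and define $h:D(h)\to\mathbb R$ by $h(x)=\Delta^{-q}_{\alpha_1\alpha_2\ldots}=\sum_{n\ge1}\frac{\alpha_n}{(-q)^n}$. *)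

From Stdlib Require Import Reals Lra Lia Classical ClassicalEpsilon.
Open Scope R_scope.

(* Sum of a convergent series (the unique l with infinite_sum f l);
   arbitrary (chosen) value if the series diverges -- all series used
   below converge absolutely. *)
Definition series_sum (f : nat -> R) : R :=
  epsilon (inhabits 0) (fun l => infinite_sum f l).

(* Admissible digit sequences: alpha n in Theta = {1,...,q-1} \ {u}.
   The paper's index n >= 1 is shifted to n >= 0 here. *)
Definition admissible (q u : nat) (alpha : nat -> nat) : Prop :=
  forall n, (1 <= alpha n)%nat /\ (alpha n < q)%nat /\ alpha n <> u.

(* partial sums alpha_1 + ... + alpha_{n} (paper indexing), i.e.
   alpha 0 + ... + alpha n here *)
Fixpoint psum (alpha : nat -> nat) (n : nat) : nat :=
  match n with
  | O => alpha O
  | S m => (psum alpha m + alpha (S m))%nat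
  end.

Definition xval (q u : nat) (alpha : nat -> nat) : R :=
  - INR u / (INR q + 1)
  + series_sum (fun n => (INR (alpha n) - INR u) / (- INR q) ^ (psum alpha n)).

Definition hval (q : nat) (alpha : nat -> nat) : R :=
  series_sum (fun n => INR (alpha n) / (- INR q) ^ (S n)).

Definition Dh (q u : nat) (x : R) : Prop :=
  exists alpha, admissible q u alpha /\ xval q u alpha = x.

(* h : D(h) -> R, h(x(alpha)) = hval alpha (extended by an arbitrary
   value outside D(h); the representation alpha of x is chosen). *)
Definition h (q u : nat) (x : R) : R :=
  hval q (epsilon (inhabits (fun _ => 1%nat))
                  (fun alpha => admissible q u alpha /\ xval q u alpha = x)).

From Stdlib Require Import Reals Lra Lia Classical ClassicalEpsilon FunctionalExtensionality.
From Coquelicot Require Import Coquelicot.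
Open Scope R_scope.

(* Both codings are built by iterating affine maps: [x(α) = block_{α_1}(x(σα))] and
   [h(α) = -(α_1 + h(σα))/q], where [block_a] prepends the nega-q-ary digits
   [u ... u a].  Every [x(α)] lies strictly inside the interval of all nega-q-ary
   numbers (this needs [q > 3]), so [α |-> x(α)] is injective and [h(x(α)) = h(α)].
   If [β] agrees with [α] in the first [n] blocks, [x(β) - x(α)] is scaled by
   [(-q)^-(α_1 + ... + α_n)] and [h(β) - h(α)] by [(-q)^-n], so the difference
   quotient is multiplied by [±q^(α_1 + ... + α_n - n)].  If [α] is not eventually
   [1], this exponent is unbounded and changing one block gives huge quotients at
   nearby points.  If [α] is eventually [1], changing one, resp. two, tail blocks to
   [c ∈ {2, 3}] gives quotients [ρ g_1] and [ρ g_2] with [|ρ| ≥ 1] and fixed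
   [g_1 ≠ g_2], which cannot both converge to the same limit. *)

Lemma series_sum_Series (f : nat -> R) : ex_series f -> series_sum f = Series f.
Proof.
  intros [l Hl]. rewrite (is_series_unique f l Hl).
  apply is_series_Reals in Hl. unfold series_sum.
  apply (uniqueness_sum f); [|exact Hl].
  apply (epsilon_spec (inhabits 0) (fun l => infinite_sum f l)). eauto.
Qed.

Section GeometricDomination.

Variables (f : nat -> R) (r : R).
Hypotheses (r_bounds : 0 <= r < 1) (f_dominated : forall k, Rabs (f k) <= r ^ k).

Let r_abs_lt1 : Rabs r < 1.
Proof. rewrite Rabs_pos_eq; lra. Qed.

Lemma ex_series_geom_dominated : ex_series f.
Proof.
  apply (@ex_series_le R_AbsRing R_CompleteNormedModule f (fun k => r ^ k)).
  - exact f_dominated.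
  - now apply ex_series_geom.
Qed.

Lemma Series_geom_dominated : Rabs (Series f) <= / (1 - r).
Proof.
  rewrite <- (is_series_unique _ _ (is_series_geom r r_abs_lt1)).
  eapply Rle_trans; [apply Series_Rabs|].
  - apply (@ex_series_le R_AbsRing R_CompleteNormedModule _ (fun k => r ^ k)).
    + intro k. rewrite Rabs_Rabsolu. apply f_dominated.
    + now apply ex_series_geom.
  - apply Series_le; [|now apply ex_series_geom].
    intro k. split; [apply Rabs_pos | apply f_dominated].
Qed.

End GeometricDomination.

Lemma Rabs_INR_sub_ge1 m n : m <> n -> 1 <= Rabs (INR m - INR n).
Proof.
  intro hmn. destruct (proj1 (Nat.lt_gt_cases m n) hmn) as [h|h]; apply le_INR in h;
    rewrite S_INR in h; [rewrite Rabs_left1 | rewrite Rabs_pos_eq]; lra.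
Qed.

Lemma Rabs_div_negpow q A m : Rabs (A / (- INR q) ^ m) = Rabs A * (/ INR q) ^ m.
Proof.
  unfold Rdiv. rewrite Rabs_mult, Rabs_inv, <- RPow_abs, Rabs_Ropp, pow_inv.
  rewrite (Rabs_pos_eq (INR q)) by apply pos_INR. reflexivity.
Qed.

Lemma scaled_pair_not_both_near rho g1 g2 l : 1 <= Rabs rho ->
  Rabs (rho * g1 - l) < Rabs (g1 - g2) / 2 -> Rabs (rho * g2 - l) < Rabs (g1 - g2) / 2 ->
  False.
Proof.
  intros Hrho H1 H2.
  assert (Rabs rho * Rabs (g1 - g2) < Rabs (g1 - g2)).
  { rewrite <- Rabs_mult. replace (rho * (g1 - g2)) with ((rho * g1 - l) - (rho * g2 - l)) by ring.
    eapply Rle_lt_trans; [apply Rabs_triang|]. rewrite Rabs_Ropp. lra. }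
  pose proof (Rabs_pos (g1 - g2)). nra.
Qed.

Lemma Rdiv_neq_rescaled x y w r : x <> 0 -> y <> 0 -> Rabs r < w -> w <= 1 ->
  x / y <> x * (1 - w) / (y * (1 + r)).
Proof.
  intros hx hy hr hw E. apply Rabs_lt_between in hr.
  assert (1 + r = 1 - w).
  { apply (Rmult_eq_reg_l (x / y)).
    - rewrite E at 1. field. split; [assumption | lra].
    - unfold Rdiv. now apply Rmult_integral_contrapositive_currified, Rinv_neq_0_compat. }
  lra.
Qed.

Definition shift (a : nat -> nat) : nat -> nat := fun k => a (S k).
Definition shiftn (n : nat) (a : nat -> nat) : nat -> nat := fun k => a (n + k)%nat.
Definition set_digit (a : nat -> nat) (n c : nat) : nat -> nat :=
  fun k => if Nat.eqb k n then c else a k.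
Definition ones : nat -> nat := fun _ => 1%nat.

(* [prefix_len a n = α_1 + ... + α_n] is the number of nega-q-ary digits taken by the
   first [n] blocks. *)
Fixpoint prefix_len (a : nat -> nat) (n : nat) : nat :=
  match n with
  | O => O
  | S m => (a 0 + prefix_len (shift a) m)%nat
  end.

Lemma admissible_shift q u a : admissible q u a -> admissible q u (shift a).
Proof. intros H k. apply H. Qed.

Lemma admissible_shiftn q u n a : admissible q u a -> admissible q u (shiftn n a).
Proof. intros H k. apply H. Qed.

Lemma admissible_set_digit q u a n c : admissible q u a ->
  (1 <= c)%nat -> (c < q)%nat -> c <> u -> admissible q u (set_digit a n c).
Proof. intros H h1 h2 h3 k. unfold set_digit. destruct (Nat.eqb k n); auto. Qed.

Lemma set_digit_other a n c k : k <> n -> set_digit a n c k = a k.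
Proof. intro hk. unfold set_digit. now rewrite (proj2 (Nat.eqb_neq k n) hk). Qed.

Lemma shiftn_set_digit n k a c : shiftn n (set_digit a (n + k) c) = set_digit (shiftn n a) k c.
Proof.
  apply functional_extensionality. intro j. unfold shiftn, set_digit.
  destruct (Nat.eqb_spec (n + j) (n + k)), (Nat.eqb_spec j k); reflexivity || lia.
Qed.

Lemma psum_shift a k : psum a (S k) = (a 0 + psum (shift a) k)%nat.
Proof. induction k as [|k IH]; [reflexivity|]. simpl in *. unfold shift in *. lia. Qed.

Lemma psum_ge q u a k : admissible q u a -> (S k <= psum a k)%nat.
Proof.
  intro H. induction k as [|k IH]; simpl.
  - destruct (H 0%nat); lia.
  - destruct (H (S k)); lia.
Qed.

Lemma prefix_len_succ a n : prefix_len a (S n) = (prefix_len a n + a n)%nat.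
Proof.
  revert a. induction n as [|n IH]; intro a; [simpl; lia|].
  change (prefix_len a (S (S n))) with (a 0 + prefix_len (shift a) (S n))%nat.
  rewrite IH. simpl. unfold shift. lia.
Qed.

Lemma prefix_len_excess q u a n m : admissible q u a -> (n <= m)%nat ->
  (prefix_len a n + (m - n) <= prefix_len a m)%nat.
Proof.
  intros H hnm. induction m as [|m IH].
  - replace n with 0%nat by lia. simpl. lia.
  - destruct (Nat.eq_dec n (S m)) as [->|ne]; [lia|].
    rewrite prefix_len_succ. destruct (H m). specialize (IH ltac:(lia)). lia.
Qed.

Lemma prefix_len_ge q u a n : admissible q u a -> (n <= prefix_len a n)%nat.
Proof. intro H. pose proof (prefix_len_excess q u a 0 n H ltac:(lia)). simpl in *. lia. Qed.

Lemma prefix_len_excess_unbounded q u a : admissible q u a ->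
  ~ (exists N, forall k, (N <= k)%nat -> a k = 1%nat) ->
  forall K, exists n, (n + K <= prefix_len a n)%nat.
Proof.
  intros Ha Hev K. induction K as [|K [n hn]]; [now exists 0%nat|].
  assert (exists k, (n <= k)%nat /\ a k <> 1%nat) as [k [hk hk1]].
  { apply NNPP. intro C. apply Hev. exists n. intros k hk.
    apply NNPP. intro C'. apply C. now exists k. }
  exists (S k). rewrite prefix_len_succ.
  pose proof (prefix_len_excess q u a n k Ha hk). destruct (Ha k). lia.
Qed.

Lemma exists_digit_avoiding u b : exists c, (1 <= c <= 3)%nat /\ c <> u /\ c <> b.
Proof.
  destruct (Nat.eq_dec u 1), (Nat.eq_dec b 1), (Nat.eq_dec u 2), (Nat.eq_dec b 2);
    first [exists 1%nat; lia | exists 2%nat; lia | exists 3%nat; lia].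
Qed.

(* [prepend q c X] is the value of the digit string [c β] when [X] is the value of [β]. *)
Definition prepend (q c : nat) (X : R) : R := - (INR c + X) / INR q.

(* The values of the strings [(q-1) 0 (q-1) 0 ...] and [0 (q-1) 0 (q-1) ...], the end
   points of the set of all nega-q-ary numbers. *)
Definition lo (q : nat) : R := - INR q / (INR q + 1).
Definition hi (q : nat) : R := / (INR q + 1).

(* The value of [u u u ...], the fixed point of [prepend q u]. *)
Definition ufix (q u : nat) : R := - INR u / (INR q + 1).

(* The value of the block [u ... u a β] ([a - 1] copies of [u]) when [X] is the value of [β]. *)
Definition block (q u a : nat) (X : R) : R := Nat.iter (a - 1) (prepend q u) (prepend q a X).

Definition x_term (q u : nat) (a : nat -> nat) (k : nat) : R :=
  (INR (a k) - INR u) / (- INR q) ^ psum a k.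
Definition h_term (q : nat) (a : nat -> nat) (k : nat) : R := INR (a k) / (- INR q) ^ S k.

Definition slope (q u : nat) (a b : nat -> nat) : R :=
  (hval q b - hval q a) / (xval q u b - xval q u a).

Section Digits.

Variable q : nat.
Hypothesis q_ge2 : (2 <= q)%nat.

Let INR_q_ge2 : 2 <= INR q.
Proof. apply (le_INR 2); lia. Qed.

Let digit_bounds c : (c < q)%nat -> 0 <= INR c <= INR q - 1.
Proof.
  intro hc. assert (INR (S c) <= INR q) by (apply le_INR; lia).
  rewrite S_INR in *. pose proof (pos_INR c). lra.
Qed.

Lemma invq_bounds : 0 < / INR q <= / 2.
Proof. split; [apply Rinv_0_lt_compat | apply Rinv_le_contravar]; lra. Qed.

Lemma invq_pow_antimono m n : (m <= n)%nat -> (/ INR q) ^ n <= (/ INR q) ^ m.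
Proof.
  intro hmn. rewrite !pow_inv.
  apply Rinv_le_contravar; [apply pow_lt; lra | apply Rle_pow; lra || lia].
Qed.

Lemma Rabs_negpow_ratio m n : (n <= m)%nat ->
  Rabs ((- INR q) ^ m / (- INR q) ^ n) = INR q ^ (m - n).
Proof.
  intro hnm. replace m with ((m - n) + n)%nat at 1 by lia. rewrite pow_add.
  unfold Rdiv. rewrite Rmult_assoc, Rinv_r, Rmult_1_r by (apply pow_nonzero; lra).
  rewrite <- RPow_abs, Rabs_Ropp, Rabs_pos_eq by lra. reflexivity.
Qed.

Let negpow_term_bound A m k : Rabs A <= INR q -> (S k <= m)%nat ->
  Rabs (A / (- INR q) ^ m) <= (/ INR q) ^ k.
Proof.
  intros hA hm. rewrite Rabs_div_negpow. pose proof invq_bounds.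
  apply Rle_trans with (INR q * (/ INR q) ^ S k).
  - apply Rmult_le_compat; auto using Rabs_pos, invq_pow_antimono.
    apply pow_le. lra.
  - right. simpl. field. lra.
Qed.

Lemma lo_hi : lo q = hi q - 1.
Proof. unfold lo, hi. field. lra. Qed.

Lemma hi_bounds : 0 < hi q < 1.
Proof.
  unfold hi. split; [apply Rinv_0_lt_compat; lra|].
  rewrite <- Rinv_1. apply Rinv_lt_contravar; lra.
Qed.

Lemma hi_scaled : INR q * hi q = 1 - hi q.
Proof. unfold hi. field. lra. Qed.

Lemma prepend_scaled c X : INR q * prepend q c X = - (INR c + X).
Proof. unfold prepend. field. lra. Qed.

Lemma prepend_sub c X Y : prepend q c X - prepend q c Y = (X - Y) / (- INR q).
Proof. unfold prepend. field. lra. Qed.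

Lemma iter_prepend_inj k c X Y : Nat.iter k (prepend q c) X = Nat.iter k (prepend q c) Y -> X = Y.
Proof.
  induction k as [|k IH]; [easy|]. rewrite !Nat.iter_succ. intro E. apply IH.
  apply Rminus_diag_eq in E. rewrite prepend_sub in E.
  apply Rminus_diag_uniq. unfold Rdiv in E.
  apply Rmult_integral in E as [E|E]; [exact E|].
  exfalso. revert E. apply Rinv_neq_0_compat. lra.
Qed.

Lemma prepend_contract c X e : (c < q)%nat -> 0 <= e ->
  lo q - e <= X <= hi q + e -> lo q - e / INR q <= prepend q c X <= hi q + e / INR q.
Proof.
  intros hc he hX.
  pose proof (digit_bounds c hc). pose proof (prepend_scaled c X). pose proof hi_scaled.
  pose proof lo_hi. assert (INR q * (e / INR q) = e) by (field; lra).
  split; nra.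
Qed.

Lemma prepend_closed c X : (c < q)%nat ->
  lo q <= X <= hi q -> lo q <= prepend q c X <= hi q.
Proof.
  intros hc hX.
  pose proof (digit_bounds c hc). pose proof (prepend_scaled c X). pose proof hi_scaled.
  pose proof lo_hi. split; nra.
Qed.

Lemma iter_prepend_closed k c X : (c < q)%nat ->
  lo q <= X <= hi q -> lo q <= Nat.iter k (prepend q c) X <= hi q.
Proof.
  intros hc hX. apply Nat.iter_invariant; [intros Y hY; now apply prepend_closed | exact hX].
Qed.

Lemma prepend_eq_hi c X : lo q <= X -> prepend q c X = hi q -> c = 0%nat /\ X = lo q.
Proof.
  intros hX E.
  pose proof (pos_INR c). pose proof (prepend_scaled c X). pose proof hi_scaled.
  pose proof lo_hi. rewrite E in *.
  split; [apply INR_eq; simpl|]; lra.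
Qed.

Lemma prepend_eq_lo c X : (c < q)%nat -> X <= hi q ->
  prepend q c X = lo q -> S c = q /\ X = hi q.
Proof.
  intros hc hX E.
  pose proof (digit_bounds c hc). pose proof (prepend_scaled c X). pose proof hi_scaled.
  pose proof lo_hi. rewrite E in *.
  split; [apply INR_eq; rewrite S_INR|]; nra.
Qed.

Lemma prepend_open c X : (c < q)%nat ->
  lo q < X < hi q -> lo q < prepend q c X < hi q.
Proof.
  intros hc hX.
  destruct (prepend_closed c X hc) as [Hl Hh]; [lra|].
  split; apply Rnot_le_lt; intro C.
  - destruct (prepend_eq_lo c X hc); lra.
  - destruct (prepend_eq_hi c X); lra.
Qed.

Lemma prepend_open_inner_digit c X : (1 <= c)%nat -> (S c < q)%nat ->
  lo q <= X <= hi q -> lo q < prepend q c X < hi q.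
Proof.
  intros hc1 hc hX.
  destruct (prepend_closed c X ltac:(lia) hX) as [Hl Hh].
  split; apply Rnot_le_lt; intro C.
  - destruct (prepend_eq_lo c X); lra || lia.
  - destruct (prepend_eq_hi c X); lra || lia.
Qed.

(* The end points have alternating digits, so a repeated digit stays off them. *)
Lemma prepend_twice_open c X : (c < q)%nat ->
  lo q <= X <= hi q -> lo q < prepend q c (prepend q c X) < hi q.
Proof.
  intros hc hX.
  pose proof (prepend_closed c X hc hX) as HY.
  destruct (prepend_closed c _ hc HY) as [Hl Hh].
  split; apply Rnot_le_lt; intro C.
  - destruct (prepend_eq_lo c (prepend q c X) hc); try lra.
    destruct (prepend_eq_hi c X); lra || lia.
  - destruct (prepend_eq_hi c (prepend q c X)); try lra.
    destruct (prepend_eq_lo c X hc); lra || lia.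
Qed.

Lemma prepend_digit_neq c d X Y : c <> d ->
  lo q < X < hi q -> lo q <= Y <= hi q -> prepend q c X <> prepend q d Y.
Proof.
  intros hcd hX hY E.
  assert (Ecd : INR c + X = INR d + Y).
  { pose proof (prepend_scaled c X). pose proof (prepend_scaled d Y). rewrite E in *. lra. }
  pose proof lo_hi. pose proof (Rabs_INR_sub_ge1 c d hcd).
  replace (INR c - INR d) with (Y - X) in * by lra.
  assert (Rabs (Y - X) < 1) by (apply Rabs_def1; lra). lra.
Qed.

Variable u : nat.
Hypothesis u_lt_q : (u < q)%nat.

Lemma block_ufix a X : (1 <= a)%nat ->
  block q u a X - ufix q u = (INR a - INR u + (X - ufix q u)) / (- INR q) ^ a.
Proof.
  intro ha. unfold block.
  assert (Iter : forall k Y,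
    Nat.iter k (prepend q u) Y - ufix q u = (- / INR q) ^ k * (Y - ufix q u)).
  { induction k as [|k IH]; intro Y; simpl; [ring|].
    replace (prepend q u _ - ufix q u) with (- (Nat.iter k (prepend q u) Y - ufix q u) / INR q)
      by (unfold prepend, ufix; field; lra).
    rewrite IH. field. lra. }
  rewrite Iter. destruct a as [|k]; [lia|]. replace (S k - 1)%nat with k by lia.
  unfold prepend, ufix. rewrite <- Rinv_opp, pow_inv. simpl.
  field. repeat split; try lra. apply pow_nonzero. lra.
Qed.

Lemma block_sub a X Y : (1 <= a)%nat -> block q u a X - block q u a Y = (X - Y) / (- INR q) ^ a.
Proof.
  intro ha. pose proof (block_ufix a X ha) as EX. pose proof (block_ufix a Y ha) as EY.
  replace (block q u a X - block q u a Y)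
    with ((block q u a X - ufix q u) - (block q u a Y - ufix q u)) by ring.
  rewrite EX, EY. field. apply pow_nonzero. lra.
Qed.

Lemma block_contract a X e : (a < q)%nat -> 0 <= e ->
  lo q - e <= X <= hi q + e -> lo q - e / INR q <= block q u a X <= hi q + e / INR q.
Proof.
  intros ha he hX. pose proof invq_bounds.
  assert (he' : 0 <= e / INR q) by (apply Rdiv_le_0_compat; lra).
  assert (e / INR q / INR q <= e / INR q).
  { unfold Rdiv at 1. rewrite <- (Rmult_1_r (e / INR q)) at 2.
    apply Rmult_le_compat_l; lra. }
  unfold block. apply Nat.iter_invariant; [|now apply prepend_contract].
  intros Y hY. pose proof (prepend_contract u Y (e / INR q) u_lt_q he' hY). lra.
Qed.

Lemma x_term_bound a k : admissible q u a -> Rabs (x_term q u a k) <= (/ INR q) ^ k.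
Proof.
  intro H. destruct (H k) as [_ [hk _]].
  apply negpow_term_bound; [|eapply psum_ge; eauto].
  pose proof (digit_bounds _ hk). pose proof (digit_bounds _ u_lt_q). apply Rabs_le. lra.
Qed.

Lemma h_term_bound a k : admissible q u a -> Rabs (h_term q a k) <= (/ INR q) ^ k.
Proof.
  intro H. destruct (H k) as [_ [hk _]].
  apply negpow_term_bound; [|lia].
  pose proof (digit_bounds _ hk). apply Rabs_le. lra.
Qed.

Lemma ex_series_x_term a : admissible q u a -> ex_series (x_term q u a).
Proof.
  intro H. pose proof invq_bounds.
  apply (ex_series_geom_dominated _ (/ INR q)); [lra|]. intro. now apply x_term_bound.
Qed.

Lemma ex_series_h_term a : admissible q u a -> ex_series (h_term q a).
Proof.
  intro H. pose proof invq_bounds.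
  apply (ex_series_geom_dominated _ (/ INR q)); [lra|]. intro. now apply h_term_bound.
Qed.

Lemma xval_shift a : admissible q u a -> xval q u a = block q u (a 0%nat) (xval q u (shift a)).
Proof.
  intro H. pose proof (admissible_shift _ _ _ H) as Hs. destruct (H 0%nat) as [ha0 _].
  enough (xval q u a - ufix q u = block q u (a 0%nat) (xval q u (shift a)) - ufix q u) by lra.
  rewrite block_ufix by assumption. unfold xval. fold (x_term q u a) (x_term q u (shift a)).
  rewrite !series_sum_Series by now apply ex_series_x_term.
  rewrite Series_incr_1 by now apply ex_series_x_term.
  rewrite (Series_ext _ (fun k => / (- INR q) ^ a 0%nat * x_term q u (shift a) k)).
  - rewrite Series_scal_l. unfold x_term, ufix. simpl psum.
    field. repeat split; try apply pow_nonzero; lra.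
  - intro k. unfold x_term. rewrite psum_shift, pow_add. unfold shift.
    field. split; apply pow_nonzero; lra.
Qed.

Lemma hval_shift a : admissible q u a -> hval q a = prepend q (a 0%nat) (hval q (shift a)).
Proof.
  intro H. pose proof (admissible_shift _ _ _ H) as Hs.
  unfold hval. fold (h_term q a) (h_term q (shift a)).
  rewrite !series_sum_Series by now apply ex_series_h_term.
  rewrite Series_incr_1 by now apply ex_series_h_term.
  rewrite (Series_ext _ (fun k => / (- INR q) * h_term q (shift a) k)).
  - rewrite Series_scal_l. unfold h_term, prepend. simpl. field. lra.
  - intro k. unfold h_term, shift. change (S (S k)) with (1 + S k)%nat. rewrite pow_add.
    field. split; [apply pow_nonzero|]; lra.
Qed.

Lemma hval_sub_shift a b : admissible q u a -> admissible q u b ->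
  hval q b - hval q a
  = (INR (a 0%nat) - INR (b 0%nat) - (hval q (shift b) - hval q (shift a))) / INR q.
Proof.
  intros Ha Hb. rewrite (hval_shift a), (hval_shift b) by assumption.
  unfold prepend. field. lra.
Qed.

Lemma xval_rough a : admissible q u a -> lo q - 4 <= xval q u a <= hi q + 4.
Proof.
  intro H. pose proof invq_bounds.
  assert (HS := Series_geom_dominated _ (/ INR q) ltac:(lra) (fun k => x_term_bound a k H)).
  assert (/ (1 - / INR q) <= 2).
  { apply Rle_trans with (/ / 2); [apply Rinv_le_contravar | rewrite Rinv_inv]; lra. }
  assert (-1 <= ufix q u <= 0).
  { assert (E : ufix q u * (INR q + 1) = - INR u) by (unfold ufix; field; lra).
    pose proof (digit_bounds u u_lt_q). split; nra. }
  unfold xval. fold (x_term q u a). rewrite series_sum_Series by now apply ex_series_x_term.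
  apply Rabs_le_between in HS. fold (ufix q u).
  pose proof hi_bounds. pose proof lo_hi. lra.
Qed.

(* Iterating the contraction of [block] shrinks the rough bound to the interval. *)
Lemma xval_near n : forall a, admissible q u a ->
  lo q - 4 * (/ INR q) ^ n <= xval q u a <= hi q + 4 * (/ INR q) ^ n.
Proof.
  induction n as [|n IH]; intros a H.
  - simpl. rewrite Rmult_1_r. now apply xval_rough.
  - rewrite xval_shift by assumption. destruct (H 0%nat) as [_ [ha0 _]].
    replace (4 * (/ INR q) ^ S n) with (4 * (/ INR q) ^ n / INR q) by (simpl; field; lra).
    apply block_contract; [assumption | | apply IH, admissible_shift, H].
    pose proof invq_bounds. apply Rmult_le_pos; [lra | apply pow_le; lra].
Qed.

Lemma xval_closed a : admissible q u a -> lo q <= xval q u a <= hi q.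
Proof.
  intro H. pose proof invq_bounds.
  assert (Small : forall d, 0 < d -> exists n, 4 * (/ INR q) ^ n < d).
  { intros d hd. destruct (pow_lt_1_zero (/ INR q) ltac:(rewrite Rabs_pos_eq; lra) (d / 4))
      as [n Hn]; [lra|].
    exists n. specialize (Hn n (le_n n)). rewrite Rabs_pos_eq in Hn by (apply pow_le; lra). lra. }
  split; apply Rnot_lt_le; intro C.
  - destruct (Small (lo q - xval q u a)) as [n Hn]; [lra|].
    pose proof (xval_near n a H). lra.
  - destruct (Small (xval q u a - hi q)) as [n Hn]; [lra|].
    pose proof (xval_near n a H). lra.
Qed.

Lemma hval_sub_depth n : forall a b, admissible q u a -> admissible q u b ->
  (forall k, (k < n)%nat -> b k = a k) ->
  hval q b - hval q a = (hval q (shiftn n b) - hval q (shiftn n a)) / (- INR q) ^ n.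
Proof.
  induction n as [|n IH]; intros a b Ha Hb E.
  { change (shiftn 0 b) with b. change (shiftn 0 a) with a. simpl. field. }
  rewrite (hval_sub_shift a b), (E 0%nat) by (assumption || lia).
  rewrite (IH (shift a) (shift b)); auto using admissible_shift.
  - change (shiftn n (shift b)) with (shiftn (S n) b).
    change (shiftn n (shift a)) with (shiftn (S n) a).
    simpl. field. split; [apply pow_nonzero|]; lra.
  - intros k hk. apply E. lia.
Qed.

Lemma xval_sub_depth n : forall a b, admissible q u a -> admissible q u b ->
  (forall k, (k < n)%nat -> b k = a k) ->
  xval q u b - xval q u a
  = (xval q u (shiftn n b) - xval q u (shiftn n a)) / (- INR q) ^ prefix_len a n.
Proof.
  induction n as [|n IH]; intros a b Ha Hb E.
  { change (shiftn 0 b) with b. change (shiftn 0 a) with a. simpl. field. }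
  rewrite (xval_shift a), (xval_shift b), (E 0%nat) by (assumption || lia).
  rewrite block_sub by (destruct (Ha 0%nat); lia).
  rewrite (IH (shift a) (shift b)); auto using admissible_shift.
  - change (shiftn n (shift b)) with (shiftn (S n) b).
    change (shiftn n (shift a)) with (shiftn (S n) a).
    simpl. rewrite pow_add. field. split; apply pow_nonzero; lra.
  - intros k hk. apply E. lia.
Qed.

Lemma xval_neq_depth n a b : admissible q u a -> admissible q u b ->
  (forall k, (k < n)%nat -> b k = a k) ->
  xval q u (shiftn n b) <> xval q u (shiftn n a) -> xval q u b <> xval q u a.
Proof.
  intros Ha Hb E Hne C. apply Rminus_diag_eq in C.
  rewrite (xval_sub_depth n a b Ha Hb E) in C. unfold Rdiv in C.
  apply Rmult_integral in C as [C|C].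
  - apply Hne. now apply Rminus_diag_uniq.
  - revert C. apply Rinv_neq_0_compat, pow_nonzero. lra.
Qed.

Lemma xval_near_depth n a b : admissible q u a -> admissible q u b ->
  (forall k, (k < n)%nat -> b k = a k) ->
  Rabs (xval q u b - xval q u a) <= (/ INR q) ^ prefix_len a n.
Proof.
  intros Ha Hb E. rewrite (xval_sub_depth n a b Ha Hb E), Rabs_div_negpow.
  rewrite <- (Rmult_1_l ((/ INR q) ^ _)) at 2.
  apply Rmult_le_compat_r; [pose proof invq_bounds; apply pow_le; lra|].
  pose proof (xval_closed _ (admissible_shiftn _ _ n _ Ha)).
  pose proof (xval_closed _ (admissible_shiftn _ _ n _ Hb)).
  pose proof lo_hi. apply Rabs_le. lra.
Qed.

Lemma slope_depth n a b : admissible q u a -> admissible q u b ->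
  (forall k, (k < n)%nat -> b k = a k) ->
  xval q u (shiftn n b) <> xval q u (shiftn n a) ->
  slope q u a b
  = (- INR q) ^ prefix_len a n / (- INR q) ^ n * slope q u (shiftn n a) (shiftn n b).
Proof.
  intros Ha Hb E Hne. unfold slope.
  rewrite (hval_sub_depth n a b), (xval_sub_depth n a b) by assumption.
  field. repeat split; try (apply pow_nonzero; lra). now apply Rminus_eq_contra.
Qed.

End Digits.

(* The difference quotients of [h] at [xval q u a], restricted to [D(h)] and read
   through the coding [b |-> xval q u b], tend to [l]. *)
Definition slope_limit (q u : nat) (a : nat -> nat) (l : R) : Prop :=
  forall eps, 0 < eps -> exists del, 0 < del /\ forall b, admissible q u b ->
    xval q u b <> xval q u a -> Rabs (xval q u b - xval q u a) < del ->
    Rabs (slope q u a b - l) < eps.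

Section Nondifferentiability.

Variables q u : nat.
Hypotheses (q_gt3 : (3 < q)%nat) (u_lt_q : (u < q)%nat).

Let q_ge2 : (2 <= q)%nat.
Proof. lia. Qed.

Let INR_q_ge2 : 2 <= INR q.
Proof. apply (le_INR 2); lia. Qed.

(* This is where [q > 3] is needed: a block with last digit [q - 1] starts with at least
   two copies of [u]. *)
Lemma xval_open a : admissible q u a -> lo q < xval q u a < hi q.
Proof.
  intro H. destruct (H 0%nat) as [h1 [h2 _]].
  pose proof (xval_closed q q_ge2 u u_lt_q _ (admissible_shift _ _ _ H)) as HX.
  rewrite (xval_shift q q_ge2 u u_lt_q a) by assumption. unfold block.
  destruct (Nat.lt_ge_cases (S (a 0%nat)) q) as [hs|hs].
  - apply Nat.iter_invariant; [intros Y hY; now apply prepend_open|].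
    now apply prepend_open_inner_digit.
  - replace (a 0%nat - 1)%nat with (S (S (q - 4))) by lia. rewrite !Nat.iter_succ.
    apply prepend_twice_open; [lia..|]. apply iter_prepend_closed; [lia..|].
    now apply prepend_closed.
Qed.

Lemma xval_first_digit_lt a b : admissible q u a -> admissible q u b ->
  (a 0%nat < b 0%nat)%nat -> xval q u a <> xval q u b.
Proof.
  intros Ha Hb hab E.
  destruct (Ha 0%nat) as [a1 [a2 a3]]. destruct (Hb 0%nat) as [b1 [b2 _]].
  rewrite (xval_shift q q_ge2 u u_lt_q a), (xval_shift q q_ge2 u u_lt_q b) in E
    by assumption.
  unfold block in E.
  replace (b 0%nat - 1)%nat with ((a 0%nat - 1) + S (b 0%nat - a 0%nat - 1))%nat in E by lia.
  rewrite Nat.iter_add, Nat.iter_succ in E. apply iter_prepend_inj in E; [|assumption].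
  revert E. apply prepend_digit_neq; [assumption | lia | |].
  - apply xval_open, admissible_shift, Ha.
  - apply iter_prepend_closed; [lia..|]. apply prepend_closed; [lia | assumption |].
    apply (xval_closed q q_ge2 u u_lt_q), admissible_shift, Hb.
Qed.

Lemma xval_first_digit a b : admissible q u a -> admissible q u b ->
  a 0%nat <> b 0%nat -> xval q u a <> xval q u b.
Proof.
  intros Ha Hb hab. destruct (proj1 (Nat.lt_gt_cases _ _) hab).
  - now apply xval_first_digit_lt.
  - apply not_eq_sym. now apply xval_first_digit_lt.
Qed.

Lemma xval_eq_shift a b : admissible q u a -> admissible q u b ->
  xval q u a = xval q u b -> a 0%nat = b 0%nat /\ xval q u (shift a) = xval q u (shift b).
Proof.
  intros Ha Hb E.
  assert (E0 : a 0%nat = b 0%nat).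
  { destruct (Nat.eq_dec (a 0%nat) (b 0%nat)) as [e|ne]; [exact e|].
    exfalso. revert E. now apply xval_first_digit. }
  split; [exact E0|].
  rewrite (xval_shift q q_ge2 u u_lt_q a), (xval_shift q q_ge2 u u_lt_q b), E0 in E
    by assumption.
  apply Rminus_diag_eq in E.
  rewrite (block_sub q q_ge2 u u_lt_q) in E by (destruct (Hb 0%nat); lia).
  unfold Rdiv in E. apply Rmult_integral in E as [E|E]; [now apply Rminus_diag_uniq|].
  exfalso. revert E. apply Rinv_neq_0_compat, pow_nonzero. lra.
Qed.

Lemma xval_injective a b : admissible q u a -> admissible q u b ->
  xval q u a = xval q u b -> a = b.
Proof.
  intros Ha Hb E. apply functional_extensionality. intro n. revert a b Ha Hb E.
  induction n as [|n IH]; intros a b Ha Hb E; destruct (xval_eq_shift a b Ha Hb E) as [E0 Es].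
  - exact E0.
  - exact (IH (shift a) (shift b) (admissible_shift _ _ _ Ha) (admissible_shift _ _ _ Hb) Es).
Qed.

Lemma h_xval a : admissible q u a -> h q u (xval q u a) = hval q a.
Proof.
  intro H. unfold h.
  set (P := fun b => admissible q u b /\ xval q u b = xval q u a).
  assert (HP : P (epsilon (inhabits (fun _ => 1%nat)) P)) by (apply epsilon_spec; now exists a).
  destruct HP as [Hb E]. f_equal. now apply xval_injective.
Qed.

Lemma slope_limit_of_limit1_in a l : admissible q u a ->
  limit1_in (fun x => (h q u x - h q u (xval q u a)) / (x - xval q u a))
            (fun x => Dh q u x /\ x <> xval q u a) l (xval q u a) ->
  slope_limit q u a l.
Proof.
  intros Ha Hl eps heps. destruct (Hl eps heps) as [del [hdel Hdel]].
  exists del. split; [assumption|]. intros b Hb hne hnear.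
  specialize (Hdel (xval q u b)). simpl in Hdel. unfold R_dist in Hdel.
  rewrite !h_xval in Hdel by assumption.
  apply Hdel. repeat split; [now exists b | assumption | assumption].
Qed.

Lemma slope_limit_depth a l eps : admissible q u a -> slope_limit q u a l -> 0 < eps ->
  exists del, 0 < del /\ forall n b, admissible q u b -> (forall k, (k < n)%nat -> b k = a k) ->
    xval q u (shiftn n b) <> xval q u (shiftn n a) -> (/ INR q) ^ prefix_len a n < del ->
    Rabs ((- INR q) ^ prefix_len a n / (- INR q) ^ n * slope q u (shiftn n a) (shiftn n b) - l)
    < eps.
Proof.
  intros Ha Hl heps. destruct (Hl eps heps) as [del [hdel Hdel]].
  exists del. split; [assumption|]. intros n b Hb E Hne Hsmall.
  rewrite <- (slope_depth q q_ge2 u u_lt_q n a b) by assumption.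
  apply Hdel; [assumption | now apply (xval_neq_depth q q_ge2 u u_lt_q n a b) |].
  eapply Rle_lt_trans; [now apply (xval_near_depth q q_ge2 u u_lt_q n a b) | exact Hsmall].
Qed.

Lemma slope_set_first_digit b c : admissible q u b ->
  (1 <= c)%nat -> (c < q)%nat -> c <> u -> c <> b 0%nat ->
  xval q u (set_digit b 0 c) <> xval q u b /\ / INR q <= Rabs (slope q u b (set_digit b 0 c)).
Proof.
  intros Hb hc1 hc2 hcu hcb.
  pose proof (admissible_set_digit q u b 0 c Hb hc1 hc2 hcu) as Hb'.
  assert (Hne : xval q u (set_digit b 0 c) <> xval q u b) by (now apply xval_first_digit).
  split; [assumption|].
  pose proof (invq_bounds q q_ge2).
  assert (Hh : / INR q <= Rabs (hval q (set_digit b 0 c) - hval q b)).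
  { rewrite (hval_sub_shift q q_ge2 u u_lt_q b) by assumption.
    change (shift (set_digit b 0 c)) with (shift b). change (set_digit b 0 c 0%nat) with c.
    rewrite Rminus_diag, Rminus_0_r. unfold Rdiv.
    rewrite Rabs_mult, (Rabs_pos_eq (/ INR q)) by lra.
    pose proof (Rabs_INR_sub_ge1 _ _ (not_eq_sym hcb)). nra. }
  assert (Hx : 0 < Rabs (xval q u (set_digit b 0 c) - xval q u b) <= 1).
  { split; [apply Rabs_pos_lt; now apply Rminus_eq_contra|].
    pose proof (xval_closed q q_ge2 u u_lt_q _ Hb).
    pose proof (xval_closed q q_ge2 u u_lt_q _ Hb').
    pose proof (lo_hi q q_ge2). apply Rabs_le. lra. }
  unfold slope, Rdiv. rewrite Rabs_mult, Rabs_inv.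
  apply Rle_trans with (Rabs (hval q (set_digit b 0 c) - hval q b)); [assumption|].
  rewrite <- (Rmult_1_r (Rabs (hval q (set_digit b 0 c) - hval q b))) at 1.
  apply Rmult_le_compat_l; [apply Rabs_pos|].
  rewrite <- Rinv_1. apply Rinv_le_contravar; lra.
Qed.

Lemma not_slope_limit_of_excess a l : admissible q u a ->
  (forall K, exists n, (n + K <= prefix_len a n)%nat) -> ~ slope_limit q u a l.
Proof.
  intros Ha Hex Hl.
  destruct (slope_limit_depth a l 1 Ha Hl ltac:(lra)) as [del [hdel Hdel]].
  destruct (Pow_x_infinity (INR q) ltac:(rewrite Rabs_pos_eq; lra) (Rabs l + 1 + / del))
    as [K HK].
  specialize (HK K (le_n K)). rewrite Rabs_pos_eq in HK by (apply pow_le; lra).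
  destruct (Hex (S K)) as [n hn].
  destruct (exists_digit_avoiding u (a n)) as [c [hc [hcu hcn]]].
  destruct (slope_set_first_digit (shiftn n a) c) as [Hne Hs];
    [now apply admissible_shiftn | lia | lia | assumption
    | unfold shiftn; now rewrite Nat.add_0_r |].
  rewrite <- shiftn_set_digit in Hne, Hs.
  assert (Hsmall : (/ INR q) ^ prefix_len a n < del).
  { apply Rle_lt_trans with ((/ INR q) ^ K); [apply (invq_pow_antimono q q_ge2); lia|].
    rewrite pow_inv, <- (Rinv_inv del). pose proof (Rabs_pos l).
    apply Rinv_lt_contravar; [|lra].
    apply Rmult_lt_0_compat; [apply Rinv_0_lt_compat | apply pow_lt]; lra. }
  specialize (Hdel n (set_digit a (n + 0) c)
    ltac:(apply admissible_set_digit; [assumption | lia | lia | assumption])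
    ltac:(intros k hk; apply set_digit_other; lia) Hne Hsmall).
  set (rho := (- INR q) ^ prefix_len a n / (- INR q) ^ n) in Hdel.
  set (s := slope q u (shiftn n a) _) in Hdel, Hs.
  assert (Hrho : INR q ^ S K <= Rabs rho).
  { unfold rho. rewrite (Rabs_negpow_ratio q q_ge2) by lia. apply Rle_pow; lra || lia. }
  assert (Hbig : INR q ^ K <= Rabs (rho * s)).
  { rewrite Rabs_mult. replace (INR q ^ K) with (INR q ^ S K * / INR q) by (simpl; field; lra).
    pose proof (invq_bounds q q_ge2).
    apply Rmult_le_compat; [apply pow_le; lra | lra | assumption | assumption]. }
  pose proof (Rabs_triang_inv (rho * s) l). pose proof (Rinv_0_lt_compat del hdel). lra.
Qed.

(* With [w = 1/q] and [r = (-q)^-c], the two slopes differ by the factor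
   [(1 - w) / (1 + r)], and [|r| < w]. *)
Lemma slope_ones_set_digit_twice c : (2 <= c)%nat -> (c < q)%nat -> c <> u -> u <> 1%nat ->
  slope q u ones (set_digit ones 0 c) <> slope q u ones (set_digit (set_digit ones 0 c) 1 c).
Proof.
  intros hc2 hcq hcu hu1.
  set (T1 := set_digit ones 0 c). set (T2 := set_digit T1 1 c).
  assert (Ho : admissible q u ones) by (intro k; unfold ones; lia).
  assert (H1 : admissible q u T1) by (apply admissible_set_digit; auto; lia).
  assert (H2 : admissible q u T2) by (apply admissible_set_digit; auto; lia).
  set (dh := hval q T1 - hval q ones). set (p := xval q u T1 - xval q u ones).
  set (w := / INR q). set (r := / (- INR q) ^ c).
  assert (Edh : dh = (1 - INR c) / INR q).
  { unfold dh. rewrite (hval_sub_shift q q_ge2 u u_lt_q ones T1 Ho H1).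
    change (shift T1) with ones. change (shift ones) with ones. change (T1 0%nat) with c.
    rewrite Rminus_diag. simpl. field. lra. }
  assert (Edh2 : hval q T2 - hval q ones = dh * (1 - w)).
  { rewrite (hval_sub_shift q q_ge2 u u_lt_q ones T2 Ho H2).
    change (shift T2) with T1. change (shift ones) with ones. change (T2 0%nat) with c.
    fold dh. rewrite Edh. unfold w. simpl. field. lra. }
  assert (Edx2 : xval q u T2 - xval q u ones = p * (1 + r)).
  { replace (xval q u T2 - xval q u ones) with ((xval q u T2 - xval q u T1) + p)
      by (unfold p; ring).
    rewrite (xval_sub_depth q q_ge2 u u_lt_q 1 T1 T2 H1 H2)
      by (intros k hk; replace k with 0%nat by lia; reflexivity).
    change (shiftn 1 T2) with T1. change (shiftn 1 T1) with ones. fold p.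
    change (prefix_len T1 1) with (c + 0)%nat. rewrite Nat.add_0_r.
    unfold r. field. apply pow_nonzero. lra. }
  assert (Hp : p <> 0).
  { apply Rminus_eq_contra, xval_first_digit; [assumption..|].
    change (T1 0%nat) with c. change (ones 0%nat) with 1%nat. lia. }
  pose proof (invq_bounds q q_ge2) as Hw. fold w in Hw.
  assert (Hr : Rabs r < w).
  { unfold r. rewrite <- (Rmult_1_l (/ _)). fold (Rdiv 1 ((- INR q) ^ c)).
    rewrite Rabs_div_negpow, Rabs_R1, Rmult_1_l.
    apply Rle_lt_trans with ((/ INR q) ^ 2); [now apply invq_pow_antimono|].
    fold w. simpl. nra. }
  assert (Hdh : dh <> 0).
  { rewrite Edh. unfold Rdiv.
    apply Rmult_integral_contrapositive_currified; [|apply Rinv_neq_0_compat; lra].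
    assert (2 <= INR c) by (apply (le_INR 2); lia). lra. }
  unfold slope. fold dh p. rewrite Edh2, Edx2. apply Rdiv_neq_rescaled; assumption || lra.
Qed.

Lemma not_slope_limit_eventually_one a l : admissible q u a ->
  (exists N, forall k, (N <= k)%nat -> a k = 1%nat) -> ~ slope_limit q u a l.
Proof.
  intros Ha [N HN] Hl.
  assert (hu1 : u <> 1%nat) by (destruct (Ha N) as [_ [_ Hu]]; now rewrite HN in Hu by lia).
  destruct (exists_digit_avoiding u 1) as [c [hc [hcu hc1]]].
  set (T1 := set_digit ones 0 c). set (T2 := set_digit T1 1 c).
  pose proof (slope_ones_set_digit_twice c ltac:(lia) ltac:(lia) hcu hu1) as Hg.
  fold T1 T2 in Hg.
  set (eps := Rabs (slope q u ones T1 - slope q u ones T2) / 2).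
  destruct (slope_limit_depth a l eps Ha Hl) as [del [hdel Hdel]].
  { apply Rdiv_lt_0_compat; [apply Rabs_pos_lt; now apply Rminus_eq_contra | lra]. }
  pose proof (invq_bounds q q_ge2).
  destruct (pow_lt_1_zero (/ INR q) ltac:(rewrite Rabs_pos_eq; lra) del hdel) as [N0 HN0].
  set (n := Nat.max N N0).
  assert (Sa : shiftn n a = ones).
  { apply functional_extensionality. intro k. apply HN. lia. }
  set (rho := (- INR q) ^ prefix_len a n / (- INR q) ^ n) in Hdel.
  assert (Near : forall b T, admissible q u b -> (forall k, (k < n)%nat -> b k = a k) ->
            shiftn n b = T -> T 0%nat <> 1%nat -> Rabs (rho * slope q u ones T - l) < eps).
  { intros b T Hb E ET HT. rewrite <- Sa, <- ET. apply Hdel; [assumption..| |].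
    - apply xval_first_digit; [now apply admissible_shiftn.. |]. now rewrite ET, Sa.
    - apply Rle_lt_trans with ((/ INR q) ^ n);
        [apply (invq_pow_antimono q q_ge2), (prefix_len_ge q u), Ha|].
      specialize (HN0 n ltac:(lia)). rewrite Rabs_pos_eq in HN0; [assumption|].
      apply pow_le. lra. }
  set (b1 := set_digit a (n + 0) c).
  assert (St1 : shiftn n b1 = T1) by (unfold b1; now rewrite shiftn_set_digit, Sa).
  assert (St2 : shiftn n (set_digit b1 (n + 1) c) = T2)
    by (now rewrite shiftn_set_digit, St1).
  apply (scaled_pair_not_both_near rho (slope q u ones T1) (slope q u ones T2) l).
  - unfold rho. rewrite (Rabs_negpow_ratio q q_ge2) by (apply (prefix_len_ge q u), Ha).
    apply pow_R1_Rle. lra.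
  - apply (Near b1); [| intros k hk; apply set_digit_other; lia | exact St1 | cbn; lia].
    apply admissible_set_digit; [assumption | lia | lia | assumption].
  - apply (Near (set_digit b1 (n + 1) c)); [| | exact St2 | cbn; lia].
    + apply admissible_set_digit; [|lia|lia|assumption].
      apply admissible_set_digit; [assumption | lia | lia | assumption].
    + intros k hk. unfold b1. rewrite !set_digit_other by lia. reflexivity.
Qed.

End Nondifferentiability.

Theorem theorem3p1 (q u : nat) (hq : (3 < q)%nat) (hu : (u < q)%nat)
  (x0 : R) (hx0 : Dh q u x0) :
  ~ (exists l : R,
       limit1_in (fun x => (h q u x - h q u x0) / (x - x0))
                 (fun x => Dh q u x /\ x <> x0) l x0).
Proof.
  intros [l Hl]. destruct hx0 as [a [Ha <-]].
  apply (slope_limit_of_limit1_in q u hq hu a l Ha) in Hl.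
  destruct (classic (exists N, forall k, (N <= k)%nat -> a k = 1%nat)) as [Hev|Hev].
  - exact (not_slope_limit_eventually_one q u hq hu a l Ha Hev Hl).
  - exact (not_slope_limit_of_excess q u hq hu a l Ha
             (prefix_len_excess_unbounded q u a Ha Hev) Hl).
Qed.
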